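(* Let $X$ be a compact metric space and $(f_n)_{n\ge1}$ a sequence of continuous maps $X\to X$. Then for every integer $k\ge2$, the space $E(X,f_{1,\infty})^*$ is a continuous image of the space $E(X,f_{k,\infty})^*$ (both as subspaces of $X^X$ with the pointwise topology).
   Context: $\mathbb{N}=\{1,2,3,\dots\}$, $\mathbb{N}^*$ is the set of free ultrafilters on $\mathbb{N}$; for $p\in\mathbb{N}^*$, $p\text{-}\lim_n x_n$ is the unique $y$ with $\{n:x_n\in V\}\in p$ for every neighbourhood $V$ of $y$. Put $f_1^n=f_n\circ\cdots\circ f_1$ and $f_1^p(x)=p\text{-}\lim_n f_1^n(x)$ for $p\in\mathbb{N}^*$; $E(X,f_{1,\infty})^*=\{f_1^p:p\in\mathbb{N}^*\}$. For $k\ge2$, let $f_k^i=f_{k+i}\circ\cdots\circ f_k$ ($i\in\mathbb{N}$), $f_k^p(x)=p\text{-}\lim_i f_k^i(x)$ for $p\in\mathbb{N}^*$, and $E(X,f_{k,\infty})^*=\{f_k^p:p\in\mathbb{N}^*\}$. *)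

From HB Require Import structures.
From mathcomp Require Import all_boot all_order all_algebra.
From mathcomp Require Import all_classical all_reals all_analysis.
Set Implicit Arguments. Unset Strict Implicit. Unset Printing Implicit Defensive.
Import Order.TTheory GRing.Theory Num.Theory.
Local Open Scope classical_set_scope.

(* The sequence of maps is f : nat -> X -> X, with f n playing the role of f_n
   (n >= 1); the value f 0 is never used. *)

(* f_1^n = f_n \o ... \o f_1   (f_1^0 = id, never relevant for free ultrafilters) *)
Fixpoint f1n (X : Type) (f : nat -> X -> X) (n : nat) : X -> X :=
  match n with
  | 0 => id
  | m.+1 => f m.+1 \o f1n f m
  end.

(* f_k^i = f_{k+i} \o ... \o f_k   (i = 0 gives f_k, never relevant) *)
Fixpoint fki (X : Type) (f : nat -> X -> X) (k i : nat) : X -> X :=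
  match i with
  | 0 => f k
  | j.+1 => f (k + j.+1)%N \o fki f k j
  end.

Definition free_ultrafilter (p : set_system nat) : Prop :=
  UltraFilter p /\ (forall A : set nat, finite_set A -> ~ p A).

Definition Estar (X : topologicalType) (s : nat -> X -> X) : set {ptws X -> X} :=
  [set g | exists p : set_system nat, free_ultrafilter p /\
     forall x : X, (fun n => s n x) @ p --> g x].

From HB Require Import structures.
From mathcomp Require Import all_boot all_order all_algebra.
From mathcomp Require Import all_classical all_reals all_analysis.
Import Order.TTheory GRing.Theory Num.Theory.
Local Open Scope classical_set_scope.

(* Since f_1^(i+k) = f_k^i o f_1^(k-1), precomposition with f_1^(k-1) maps
   E(X, f_(k,oo))^* into E(X, f_(1,oo))^*: push the ultrafilter forward along
   n |-> n + k.  Conversely, push an ultrafilter forward along n |-> n - k;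
   compactness supplies the pointwise limits and Hausdorffness identifies them.
   Precomposition is always continuous for the pointwise topology. *)

Lemma fmap_ultra {T U : Type} (g : T -> U) {F : set_system T} :
  UltraFilter F -> UltraFilter (g @ F).
Proof.
move=> FU; split; first exact: fmap_proper_filter.
move=> G PG sub; apply/seteqP; split; last exact: sub.
move=> A GA; case: (in_ultra_setVsetC (g @^-1` A) FU) => // FnA.
have GnA : G (~` A) by apply: sub; rewrite /= /fmap /= preimage_setC.
by have /filter_ex [? []] : G (A `&` ~` A) by exact: filterI.
Qed.

Lemma free_ultrafilter_fmap (g : nat -> nat) (p : set_system nat) :
  (forall A, finite_set A -> finite_set (g @^-1` A)) ->
  free_ultrafilter p -> free_ultrafilter (g @ p).
Proof.
move=> gfin [pU pfree]; split; first exact: fmap_ultra.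
by move=> A /gfin; exact: pfree.
Qed.

Lemma finite_preimage_addn (k : nat) (A : set nat) :
  finite_set A -> finite_set ((fun n => n + k)%N @^-1` A).
Proof.
move=> finA; apply: sub_finite_set (finite_image (fun n => n - k)%N finA).
by move=> n /= An; exists (n + k)%N => //; rewrite addnK.
Qed.

Lemma finite_preimage_subn (k : nat) (A : set nat) :
  finite_set A -> finite_set ((fun n => n - k)%N @^-1` A).
Proof.
move=> finA; have : finite_set ((fun n => n + k)%N @` A `|` `I_k).
  by rewrite finite_setU; split; [exact: finite_image | exact: finite_II].
apply: sub_finite_set => n /= An; case: (ltnP n k) => kn; first by right.
by left; exists (n - k)%N => //; rewrite subnK.
Qed.

Lemma free_ultrafilter_ge {p : set_system nat} (k : nat) :
  free_ultrafilter p -> \forall n \near p, (k <= n)%N.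
Proof.
move=> [pU pfree].
case: (in_ultra_setVsetC `I_k pU) => [/(pfree _ (finite_II k))[] |].
by apply: filterS => n /negP; rewrite -leqNgt.
Qed.

Lemma compact_ultra_cvg {T : topologicalType} {F : set_system T} :
  compact [set: T] -> UltraFilter F -> exists l : T, F --> l.
Proof.
rewrite compact_ultra => /(_ F) cptT FU.
by have [l [_ Fl]] := cptT FU filterT; exists l.
Qed.

Lemma f1nD (X : Type) (f : nat -> X -> X) (k i : nat) : (0 < k)%N ->
  f1n f (i + k) = fki f k i \o f1n f k.-1.
Proof.
case: k => // k _; elim: i => [|i IH]; first by rewrite add0n.
by rewrite addSn /= IH [(k.+1 + _)%N]addnC addSn.
Qed.

Lemma precomp_ptws_continuous (U : topologicalType) (V : uniformType)
    (phi : U -> U) :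
  continuous (fun g : {ptws U -> V} => (g \o phi : {ptws U -> V})).
Proof.
move=> g; apply/(@pointwise_cvgP U V
  ((fun h : {ptws U -> V} => h \o phi) @ nbhs g) (g \o phi) _) => x.
exact: (@pointwise_cvgP U V (nbhs g) g _).1 (@cvg_id _ (nbhs g)) (phi x).
Qed.

Section EstarPrecomposition.
Variables (X : topologicalType) (s t : nat -> X -> X) (phi : X -> X) (k : nat).
Hypothesis tE : forall i, t (i + k)%N = s i \o phi.

Lemma Estar_precomp_sub : [set g \o phi | g in Estar s] `<=` Estar t.
Proof.
move=> _ [g [p [pfree pg]] <-].
exists ((fun n => n + k)%N @ p); split.
  exact: free_ultrafilter_fmap (@finite_preimage_addn k) pfree.
move=> x; change ((fun n => t (n + k)%N x) @ p --> g (phi x)).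
have -> : (fun n => t (n + k)%N x) = fun n => s n (phi x).
  by apply/funext => n; rewrite tE.
exact: pg.
Qed.

Lemma Estar_precomp_sup : hausdorff_space X -> compact [set: X] ->
  Estar t `<=` [set g \o phi | g in Estar s].
Proof.
move=> hX cptX g' [q [qfree qg']]; have qU := qfree.1.
pose p := (fun n => n - k)%N @ q.
have pfree : free_ultrafilter p.
  exact: free_ultrafilter_fmap (@finite_preimage_subn k) qfree.
have : forall x, exists l : X, (fun n => s n x) @ p --> l.
  by move=> x; exact: compact_ultra_cvg cptX (fmap_ultra _ pfree.1).
case/choice => g pg; exists g; first by exists p.
apply/funext => x /=; apply: (cvg_unique hX _ (qg' x)).
apply: cvg_trans _ (pg (phi x)); apply: near_eq_cvg.
apply: filterS (free_ultrafilter_ge k qfree) => n /= kn.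
by rewrite -[in RHS](subnK kn) tE.
Qed.

End EstarPrecomposition.

Theorem theorem2p6 (R : realType) (X : metricType R) (f : nat -> X -> X) :
  compact [set: X] ->
  (forall n : nat, (1 <= n)%N -> continuous (f n)) ->
  forall k : nat, (2 <= k)%N ->
  exists h : {ptws X -> X} -> {ptws X -> X},
    {within Estar (fki f k), continuous h} /\
    h @` Estar (fki f k) = Estar (f1n f).
Proof.
move=> cptX _ k k2.
have tE : forall i, f1n f (i + k) = fki f k i \o f1n f k.-1.
  by move=> i; apply: f1nD; apply: leq_trans k2.
exists (fun g : {ptws X -> X} => (g \o f1n f k.-1 : {ptws X -> X})); split.
  exact/continuous_subspaceT/precomp_ptws_continuous.
apply/seteqP; split; first exact: Estar_precomp_sub.
exact: Estar_precomp_sup (@metric_hausdorff _ X) cptX.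
Qed.
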